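(* Let $\beta_{2k}:=B_{2k}/(2k)!$. For every even integer $N\ge4$ and every integer $i$ with $0\le i\le N/2-1$, $$\sum_{k=0}^{N/2-1-\lfloor i/2\rfloor}\beta_{2k}\beta_{N-2k}\binom{N-2k}{i}+\sum_{l=0}^{\lfloor i/2\rfloor}\beta_{2l}\beta_{N-2l}\binom{N-2l}{i-2l+1}=0.$$
   Context: Bernoulli numbers are defined by $\frac{z}{e^z-1}=\sum_{m\ge0}\frac{B_m}{m!}z^m$; equivalently $\frac x2\coth\frac x2=\sum_{J\ge0}\beta_{2J}x^{2J}$. Convention: $\binom ab=0$ if $b<0$ or $b>a$. *)

From mathcomp Require Import all_boot all_order all_algebra.
Set Implicit Arguments. Unset Strict Implicit. Unset Printing Implicit Defensive.
Import Order.TTheory GRing.Theory Num.Theory.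
Local Open Scope ring_scope.

(* Coefficients beta_m = B_m / m! of the generating function
   z/(e^z - 1) = sum_m beta_m z^m.  Multiplying by (e^z-1)/z = sum_j z^j/(j+1)!
   and extracting the coefficient of z^m gives
     sum_{k=0}^m beta_k / (m-k+1)! = [m == 0],
   which determines beta_m recursively; bern_gf_list n = [beta_0; ...; beta_n]. *)
Fixpoint bern_gf_list (n : nat) : seq rat :=
  match n with
  | 0 => [:: 1]
  | n'.+1 =>
      let s := bern_gf_list n' in
      rcons s (- \sum_(k < n'.+1) s`_k / ((n'.+1 - k).+1)`!%:R)
  end.

Definition bern_coef (m : nat) : rat := (bern_gf_list m)`_m.

Definition bernoulli (m : nat) : rat := (m`!)%:R * bern_coef m.

Definition beta (m : nat) : rat := bernoulli m / (m`!)%:R.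

From Corelib Require Import Setoid.
From mathcomp Require Import all_boot all_order all_algebra zify ring lra.
Import Order.TTheory GRing.Theory Num.Theory.
Local Open Scope ring_scope.

(* Write F(z) = z/(e^z - 1) = sum_m beta_m z^m.  Dividing
     e^((x+y)z) - 1 = (e^(xz) - 1)(e^(yz) - 1) + (e^(xz) - 1) + (e^(yz) - 1)
   by the product of the three factors gives
     (x+y) F(xz) F(yz) = x F(yz) F((x+y)z) + y F(xz) F((x+y)z) + x y z F((x+y)z).
   Taking x = t, y = 1 and comparing the coefficients of z^N t^(i+1) yields a
   binomial convolution identity between the beta_m.  Taking x = 1, y = -1
   instead gives F(-z) = F(z) + z, so beta_m = 0 for odd m > 1; for even N the
   odd-index terms of the convolution therefore vanish and what remains are the
   two sums of the theorem. *)

Lemma size_bern_gf_list n : size (bern_gf_list n) = n.+1.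
Proof. by elim: n => //= n IH; rewrite size_rcons IH. Qed.

Lemma nth_bern_gf_list n k : (k <= n)%N -> (bern_gf_list n)`_k = bern_coef k.
Proof.
elim: n => [|n IH]; first by rewrite leqn0 => /eqP->.
rewrite leq_eqVlt => /orP[/eqP->//|lt_kn].
by rewrite /= nth_rcons size_bern_gf_list lt_kn IH.
Qed.

Lemma bern_coef0 : bern_coef 0 = 1.
Proof. by []. Qed.

Lemma bern_coef_rec n :
  \sum_(j < n.+1) bern_coef j / ((n - j).+1)`!%:R = (n == 0)%:R.
Proof.
case: n => [|n]; first by rewrite big_ord1 bern_coef0 divr1.
rewrite big_ord_recr /= subnn divr1 {2}/bern_coef /=.
rewrite nth_rcons size_bern_gf_list ltnn eqxx; apply/eqP; rewrite subr_eq0.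
by apply/eqP/eq_bigr => j _; rewrite nth_bern_gf_list // -ltnS.
Qed.

Lemma betaE m : beta m = bern_coef m.
Proof.
by rewrite /beta /bernoulli mulrAC divff ?mul1r // pnatr_eq0 -lt0n fact_gt0.
Qed.

Section CongruenceModXn.
Variable R : nzRingType.

Definition eqmodX (m : nat) (p q : {poly R}) := forall k, (k < m)%N -> p`_k = q`_k.

Lemma eqmodX_equiv m : Equivalence (eqmodX m).
Proof. by split=> [p|p q pq|p q r pq qr] k lt_km; rewrite ?pq ?qr. Qed.

Lemma eqmodX_eq m p q : p = q -> eqmodX m p q.
Proof. by move->. Qed.

Lemma eqmodX_leq m n p q : (n <= m)%N -> eqmodX m p q -> eqmodX n p q.
Proof. by move=> le_nm pq k lt_kn; rewrite pq // (leq_trans lt_kn le_nm). Qed.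

Lemma eqmodX_add1X m p q :
  eqmodX m.+1 (1 + 'X * p) (1 + 'X * q) -> eqmodX m p q.
Proof. by move=> pq k lt_km; have := pq k.+1 lt_km; rewrite !coefD !coefXM => /addrI. Qed.

Lemma coefM_poly L (a b : nat -> R) k : (k < L)%N ->
  (\poly_(n < L) a n * \poly_(n < L) b n)`_k = \sum_(j < k.+1) a j * b (k - j)%N.
Proof.
move=> lt_kL; rewrite coefM; apply: eq_bigr => [[j le_jk]] _ /=.
by rewrite !coef_poly (leq_ltn_trans _ lt_kL) ?(leq_ltn_trans (leq_subr _ _) lt_kL).
Qed.

End CongruenceModXn.

Arguments eqmodX {R}.
Existing Instance eqmodX_equiv.

Add Parametric Morphism (R : nzRingType) m : (@GRing.add {poly R})
  with signature eqmodX m ==> eqmodX m ==> eqmodX m as eqmodXD.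
Proof. by move=> p p' pp' q q' qq' k lt_km; rewrite !coefD pp' ?qq'. Qed.

Add Parametric Morphism (R : nzRingType) m : (@GRing.mul {poly R})
  with signature eqmodX m ==> eqmodX m ==> eqmodX m as eqmodXM.
Proof.
move=> p p' pp' q q' qq' k lt_km; rewrite !coefM.
by apply: eq_bigr => [[j lt_jk]] _ /=; rewrite pp' ?qq' //; lia.
Qed.

Lemma coef_XD1_exp (R : nzSemiRingType) n k : (('X + 1) ^+ n)`_k = 'C(n, k)%:R :> R.
Proof.
have -> : ('X + 1) ^+ n = \poly_(i < n.+1) 'C(n, i)%:R :> {poly R}.
  by rewrite exprD1n poly_def; apply: eq_bigr => i _; rewrite scaler_nat.
by rewrite coef_poly; case: ltnP => // /bin_small->.
Qed.

Lemma sum_nat_tail0 {R : nmodType} m n (F : nat -> R) : (m <= n)%N ->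
  (forall k, (m <= k < n)%N -> F k = 0) ->
  \sum_(0 <= k < n) F k = \sum_(0 <= k < m) F k.
Proof.
move=> le_mn F0; rewrite (@big_cat_nat _ _ _ m) //=.
by rewrite [X in _ + X]big_nat_cond [X in _ + X]big1 ?addr0 // => k /andP[/F0].
Qed.

Lemma sum_nat_double {R : nmodType} n (F : nat -> R) :
  (forall k, F k.*2.+1 = 0) -> \sum_(0 <= j < n.*2) F j = \sum_(0 <= k < n) F k.*2.
Proof.
move=> F_odd; elim: n => [|n IH]; first by rewrite !big_geq.
by rewrite doubleS !big_nat_recr //= IH F_odd addr0.
Qed.

Lemma sum_nat_even {R : nmodType} n (F : nat -> R) :
  (forall k, F k.*2.+1 = 0) -> \sum_(0 <= j < n) F j = \sum_(0 <= k < uphalf n) F k.*2.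
Proof.
move=> F_odd; rewrite uphalf_half -[in LHS](odd_double_half n).
case: (odd n) => /=; last by rewrite add0n sum_nat_double.
by rewrite big_nat_recr //= sum_nat_double // big_nat_recr.
Qed.

Lemma invfact_bin k j : (j <= k)%N ->
  (k`!%:R : rat)^-1 * 'C(k, j)%:R = (j`!%:R)^-1 * ((k - j)`!%:R)^-1.
Proof.
move=> le_jk; rewrite -(bin_fact le_jk) !natrM.
have fact_neq0 n : (n`!%:R : rat) != 0 by rewrite pnatr_eq0 -lt0n fact_gt0.
have bin_neq0 : ('C(k, j)%:R : rat) != 0 by rewrite pnatr_eq0 -lt0n bin_gt0.
by field; rewrite !fact_neq0 bin_neq0.
Qed.

Section BernoulliSeries.
Variable A : comAlgType rat.
Implicit Types (c d : A) (L : nat).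

(* Truncations to degree < L of F(cz), e^(cz) and (e^(cz) - 1)/(cz). *)
Definition bern_ser L c : {poly A} := \poly_(n < L) ((bern_coef n)%:A * c ^+ n).
Definition exp_ser L c : {poly A} := \poly_(n < L) ((n`!%:R)^-1%:A * c ^+ n).
Definition expm1_ser L c : {poly A} :=
  \poly_(n < L) (((n.+1)`!%:R)^-1%:A * c ^+ n).

Lemma bern_ser0 L : bern_ser L.+1 0 = 1.
Proof.
apply/polyP => k; rewrite coef_poly coef1 expr0n.
by case: k => [|k]; rewrite /= ?mulr0 ?if_same // bern_coef0 scale1r mulr1n mulr1.
Qed.

Lemma bern_serK L c : eqmodX L (bern_ser L c * expm1_ser L c) 1.
Proof.
move=> k lt_kL; rewrite coefM_poly // coef1.
transitivity (\sum_(j < k.+1) in_alg A (bern_coef j / ((k - j).+1)`!%:R) * c ^+ k).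
  apply: eq_bigr => j _; rewrite -!in_algE.
  have -> : c ^+ k = c ^+ j * c ^+ (k - j) by rewrite -exprD subnKC // -ltnS.
  ring.
rewrite -big_distrl -rmorph_sum bern_coef_rec /=.
by case: k {lt_kL} => [|k]; rewrite /= ?scale1r ?mulr1 ?scale0r ?mul0r.
Qed.

Lemma exp_serD L c d : eqmodX L (exp_ser L c * exp_ser L d) (exp_ser L (c + d)).
Proof.
move=> k lt_kL; rewrite coefM_poly // coef_poly lt_kL addrC exprDn mulr_sumr.
apply: eq_bigr => j _; rewrite -!in_algE -[_ *+ 'C(k, j)]mulr_natl.
rewrite -[('C(k, j)%:R : A)](rmorph_nat (in_alg A)) !mulrA.
have -> : in_alg A (k`!%:R^-1) * in_alg A 'C(k, j)%:R
          = in_alg A (j`!%:R^-1) * in_alg A ((k - j)`!%:R^-1).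
  by rewrite -!rmorphM invfact_bin // -ltnS.
by move: (in_alg A _) (in_alg A _) => a b; ring.
Qed.

Lemma exp_serE L c : eqmodX L (exp_ser L c) (1 + 'X * (c%:P * expm1_ser L c)).
Proof.
move=> k lt_kL; rewrite coefD coef1 coefXM coef_poly lt_kL.
case: k lt_kL => [|k] lt_kL /=; first by rewrite fact0 invr1 scale1r mulr1 addr0.
by rewrite add0r coefCM coef_poly ltnW // exprS; ring.
Qed.

Lemma expm1_serD L c d :
  eqmodX L ((c + d)%:P * expm1_ser L.+1 (c + d))
    (c%:P * expm1_ser L.+1 c + d%:P * expm1_ser L.+1 d
     + 'X * (c * d)%:P * expm1_ser L.+1 c * expm1_ser L.+1 d).
Proof.
apply: eqmodX_add1X; rewrite -exp_serE -exp_serD !exp_serE.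
by apply: eqmodX_eq; rewrite polyCM; ring.
Qed.

Lemma coef_bern_serM L c d N : (N < L)%N ->
  (bern_ser L c * bern_ser L d)`_N
  = \sum_(j < N.+1) (bern_coef j * bern_coef (N - j)) *: (c ^+ j * d ^+ (N - j)).
Proof.
move=> lt_NL; rewrite coefM_poly //; apply: eq_bigr => j _.
by rewrite -[in RHS]mulr_algl -!in_algE; ring.
Qed.

Lemma bern_ser_addition L c d :
  eqmodX L ((c + d)%:P * bern_ser L.+1 c * bern_ser L.+1 d)
    (c%:P * bern_ser L.+1 d * bern_ser L.+1 (c + d)
     + d%:P * bern_ser L.+1 c * bern_ser L.+1 (c + d)
     + 'X * (c * d)%:P * bern_ser L.+1 (c + d)).
Proof.
set F := bern_ser L.+1; set G := expm1_ser L.+1.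
have FG e : eqmodX L (F e * G e) 1 by apply: eqmodX_leq (bern_serK _ e).
transitivity (F c * F d * (F (c + d) * G (c + d)) * (c + d)%:P).
  by rewrite FG; apply: eqmodX_eq; ring.
rewrite mulrA -[_ * G (c + d) * _]mulrA [G _ * _]mulrC expm1_serD -/(G c) -/(G d).
transitivity (c%:P * F d * F (c + d) * (F c * G c) + d%:P * F c * F (c + d) * (F d * G d)
              + 'X * (c * d)%:P * F (c + d) * (F c * G c) * (F d * G d)).
  by apply: eqmodX_eq; rewrite polyCM; ring.
by rewrite !FG; apply: eqmodX_eq; ring.
Qed.

Lemma bern_conv_add N c d : (0 < N)%N ->
  (c + d) * \sum_(j < N.+1) (bern_coef j * bern_coef (N - j)) *: (c ^+ j * d ^+ (N - j))
  = c * \sum_(j < N.+1) (bern_coef j * bern_coef (N - j)) *: (d ^+ j * (c + d) ^+ (N - j))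
  + d * \sum_(j < N.+1) (bern_coef j * bern_coef (N - j)) *: (c ^+ j * (c + d) ^+ (N - j))
  + c * d * (bern_coef N.-1 *: (c + d) ^+ N.-1).
Proof.
move=> N_gt0; have := bern_ser_addition N.+1 c d N (ltnSn N).
rewrite -!mulrA !coefD !coefCM coefXM -(prednK N_gt0) /= coefCM !coef_bern_serM //.
rewrite prednK // coef_poly ifT; last by lia.
by rewrite mulr_algl => ->; rewrite mulrA.
Qed.

End BernoulliSeries.

Lemma bern_coef_odd k : odd k -> (1 < k)%N -> bern_coef k = 0.
Proof.
move=> odd_k lt1k.
have := bern_ser_addition _ k.+1 (1 : rat^o) (-1) k (ltnSn k).
rewrite subrr polyC0 !mul0r bern_ser0 !mulr1 coef0 !coefD coefXM !coefCM.
rewrite !coef_poly ltnS leqnSn coefC; case: k odd_k lt1k => [|[|k]] //= odd_k _.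
rewrite -signr_odd /= odd_k expr1 expr1n !mulr1 mul1r mulN1r addr0.
move=> /esym/eqP; rewrite mulrN1 -opprD oppr_eq0 -mulr2n mulrn_eq0 /=.
by rewrite [_%:A]mulr1 => /eqP.
Qed.

Lemma bern_conv_coef N i : (0 < N)%N -> (i < N)%N ->
  bern_coef i * bern_coef (N - i) + bern_coef i.+1 * bern_coef (N - i.+1)
  = \sum_(j < N.+1) bern_coef j * bern_coef (N - j) * 'C(N - j, i)%:R
    + \sum_(j < N.+1) bern_coef j * bern_coef (N - j)
                        * (if (i.+1 < j)%N then 0 else 'C(N - j, i.+1 - j)%:R)
    + bern_coef N.-1 * 'C(N.-1, i)%:R.
Proof.
move=> N_gt0 lt_iN; set a := fun j => bern_coef j * bern_coef (N - j).
have := congr1 (fun p : {poly rat} => p`_i.+1) (bern_conv_add _ N 'X 1 N_gt0).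
have -> : \sum_(j < N.+1) a j *: ('X^j * 1 ^+ (N - j)) = \poly_(j < N.+1) a j :> {poly rat}.
  by rewrite poly_def; apply: eq_bigr => j _; rewrite expr1n mulr1.
rewrite /= mulrDl 2![1 * _]mul1r [_ * 1]mulr1 !coefD !coefXM !coef_poly /=.
rewrite !ltnS (ltnW lt_iN) lt_iN coefZ coef_XD1_exp !coef_sum => E; rewrite E.
congr (_ + _ + _); apply: eq_bigr => j _; rewrite coefZ.
  by rewrite [1 ^+ _]expr1n [1 * _]mul1r coef_XD1_exp.
by rewrite coefXnM; case: ltnP; rewrite ?coef_XD1_exp.
Qed.

Lemma bern_conv_binomial N i : (0 < N)%N -> (i < N)%N ->
  \sum_(0 <= j < N - i) bern_coef j * bern_coef (N - j) * 'C(N - j, i)%:R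
  + \sum_(0 <= j < i.+1) bern_coef j * bern_coef (N - j) * 'C(N - j, i.+1 - j)%:R
  + bern_coef N.-1 * 'C(N.-1, i)%:R = 0.
Proof.
move=> N_gt0 lt_iN; have := bern_conv_coef _ _ N_gt0 lt_iN.
set a := fun j => bern_coef j * bern_coef (N - j); have le_iN := ltnW lt_iN.
(* The terms j = N - i of the first sum and j = i + 1 of the second cancel the
   left-hand side; beyond them the binomial coefficients vanish. *)
have sum1E : \sum_(j < N.+1) a j * 'C(N - j, i)%:R
              = \sum_(0 <= j < N - i) a j * 'C(N - j, i)%:R + a i.
  rewrite -(big_mkord xpredT (fun j => a j * 'C(N - j, i)%:R)).
  rewrite (@sum_nat_tail0 _ (N - i).+1).
  - by rewrite big_nat_recr //= subKn // binn mulr1 /a subKn // mulrC.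
  - by rewrite ltnS leq_subr.
  by move=> k /andP[lt_k lt_kN]; rewrite bin_small ?mulr0 //; lia.
have sum2E : \sum_(j < N.+1) a j * (if (i.+1 < j)%N then 0 else 'C(N - j, i.+1 - j)%:R)
              = \sum_(0 <= j < i.+1) a j * 'C(N - j, i.+1 - j)%:R + a i.+1.
  rewrite -(big_mkord xpredT
    (fun j => a j * (if (i.+1 < j)%N then 0 else 'C(N - j, i.+1 - j)%:R))).
  rewrite (@sum_nat_tail0 _ i.+2) //.
  - rewrite big_nat_recr //= ltnn subnn bin0 mulr1; congr (_ + _).
    by apply: eq_big_nat => j /andP[_ lt_ji]; rewrite ltnNge (ltnW lt_ji).
  by move=> k /andP[lt_ik _]; rewrite lt_ik mulr0.
rewrite sum1E sum2E /a /= => E; lra.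
Qed.

Lemma bern_conv_odd N k : ~~ odd N -> (2 < N)%N ->
  bern_coef k.*2.+1 * bern_coef (N - k.*2.+1) = 0.
Proof.
move=> even_N N_gt2; case: k => [|k].
  by rewrite (bern_coef_odd (N - 1)) ?mulr0 //; lia.
by rewrite bern_coef_odd ?mul0r //= odd_double.
Qed.

Theorem mainTheorem8 (N i : nat) :
  ~~ odd N -> (4 <= N)%N -> (i <= N./2 - 1)%N ->
  \sum_(0 <= k < (N./2 - 1 - i./2).+1)
      beta k.*2 * beta (N - k.*2) * ('C(N - k.*2, i))%:R
  + \sum_(0 <= l < (i./2).+1)
      beta l.*2 * beta (N - l.*2) * ('C(N - l.*2, i.+1 - l.*2))%:R
  = 0 :> rat.
Proof.
move=> even_N le4N le_i_half.
have [N_gt2 lt_iN] : (2 < N)%N /\ (i < N)%N by lia.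
have := bern_conv_binomial _ _ (ltnW (ltnW N_gt2)) lt_iN.
rewrite (bern_coef_odd N.-1) ?mul0r ?addr0; [| lia | lia].
rewrite (sum_nat_even (N - i)) => [|k]; last by rewrite bern_conv_odd ?mul0r.
rewrite (sum_nat_even i.+1) => [|k]; last by rewrite bern_conv_odd ?mul0r.
have -> : uphalf (N - i) = (N./2 - 1 - i./2).+1 by lia.
have -> : uphalf i.+1 = (i./2).+1 by lia.
move=> E; rewrite -[RHS]E.
by congr (_ + _); apply: eq_bigr => k _; rewrite !betaE.
Qed.
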